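(* For every integer $n\ge 1$ and every real $y\in[0,1]$, $$\rho(n-y)=\rho(n)+\sum_{j=1}^{n-1}\rho(n-j)\,M_{j,n}(y),$$ where $\rho$ is the Dickman function and $M_{j,n}$ are the multiple polylogarithms defined in the context.
   Context: The Dickman function $\rho:[0,\infty)\to\mathbb{R}$ is the continuous function with $\rho(u)=1$ for $u\in[0,1]$ and $u\rho'(u)=-\rho(u-1)$ for $u>1$. For integers $n>j>0$ and real $y\in[0,1]$ define $$M_{j,n}(y)=\sum_{n_1>n_2>\cdots>n_j>0}\ \prod_{i=1}^{j}\frac{z_i^{n_i}}{n_i},\qquad z_1=\frac{y}{n},\quad z_i=\frac{n+2-i}{n+1-i}\ \text{for } 1<i\le j,$$ the sum running over integers $n_1,\dots,n_j$ (it converges for these parameters). *)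

From Stdlib Require Import Reals List Arith.
From Coquelicot Require Import Coquelicot.
Open Scope R_scope.

Definition is_dickman (rho : R -> R) : Prop :=
  (forall u, 0 <= u -> filterlim rho (within (fun x => 0 <= x) (locally u)) (locally (rho u)))
  /\ (forall u, 0 <= u <= 1 -> rho u = 1)
  /\ (forall u, 1 < u -> exists d, is_derive rho u d /\ u * d = - rho (u - 1)).

(* nest [z_1; ...; z_k] N = sum over N > n_1 > n_2 > ... > n_k > 0
   of prod_i z_i^{n_i} / n_i  (empty product = 1). *)
Fixpoint nest (zs : list R) (N : nat) : R :=
  match zs with
  | nil => 1
  | z :: zs' => sum_n_m (fun m => z ^ m / INR m * nest zs' m) 1 (N - 1)
  end.

Definition zpar (n : nat) (y : R) (i : nat) : R :=
  if Nat.eqb i 1 then y / INR n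
  else (INR n + 2 - INR i) / (INR n + 1 - INR i).

(* M_{j,n}(y): the (convergent, nonnegative-term) multiple series, as the limit
   of its partial sums over n_1 < N. *)
Definition M (j n : nat) (y : R) : R :=
  real (Lim_seq (fun N => nest (map (zpar n y) (seq 1 j)) N)).

From Stdlib Require Import Reals List Arith Lia Lra.
From Coquelicot Require Import Coquelicot.
Open Scope R_scope.

(* For 1 <= j <= n the multiple polylogarithm M_{j,n}(y) is a
   power series in y whose m-th coefficient is n^{-m}/m times the nested sum
   over the remaining parameters z_2, ..., z_j.  Bounding nested sums by a
   geometric sequence whose ratio is the product of the parameters, which
   telescopes to n/(n+1-j), shows that the radius of convergence is at least
   n+1-j.  Since z_2 = n/(n-1) and the other parameters of M_{j+1,n} are those
   of M_{j,n-1}, comparing coefficients gives the differential identities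
       (n - y) M_{1,n}'(y) = 1,        (n - y) M_{j+1,n}'(y) = M_{j,n-1}(y).
   Hence the right-hand side F_n(y) of the theorem satisfies
   (n - y) F_n'(y) = F_{n-1}(y), whereas the delay equation gives
   (n - y) d/dy rho(n - y) = rho(n - 1 - y).  By induction on n, both sides
   have the same derivative on (0, 1) and agree at y = 0 (M_{j,n}(0) = 0), so
   they coincide on [0, 1]. *)

Lemma sum_n_m_nonneg (f : nat -> R) (m k : nat) :
  (forall i, 0 <= f i) -> 0 <= sum_n_m f m k.
Proof.
  intros Hf. apply Rle_trans with (sum_n_m (fun _ => 0) m k).
  - rewrite sum_n_m_const. lra.
  - apply sum_n_m_le. exact Hf.
Qed.

(* 0 <= 1/m <= 1 for every natural m (with the convention 1/0 = 0). *)
Lemma inv_INR_bounds (m : nat) : 0 <= / INR m <= 1.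
Proof.
  destruct m as [|m].
  - simpl. rewrite Rinv_0. lra.
  - assert (1 <= INR (S m)) by (apply (le_INR 1); lia).
    split; [left; apply Rinv_0_lt_compat; lra|].
    rewrite <- Rinv_1. apply Rinv_le_contravar; lra.
Qed.

Lemma geom_sum_le (s : R) (m : nat) :
  1 < s -> sum_n_m (fun k => s ^ k) 1 (m - 1) <= s ^ m / (s - 1).
Proof.
  intros Hs.
  assert (Hq : forall k, 0 <= s ^ k / (s - 1))
    by (intros k; apply Rdiv_le_0_compat; [apply pow_le|]; lra).
  induction m as [|[|m] IH].
  - rewrite sum_n_m_zero by lia. apply Hq.
  - rewrite sum_n_m_zero by lia. apply Hq.
  - replace (S (S m) - 1)%nat with (S m) by lia.
    replace (S m - 1)%nat with m in IH by lia.
    destruct m as [|m].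
    + rewrite sum_n_n. apply (Rmult_le_reg_r (s - 1)); [lra|].
      unfold Rdiv. rewrite Rmult_assoc, Rinv_l by lra. simpl. nra.
    + rewrite sum_n_Sm by lia. change (plus ?a ?b) with (a + b).
      apply Rle_trans with (s ^ S (S m) / (s - 1) + s ^ S (S m)); [lra|].
      right. simpl. field. lra.
Qed.

Lemma Series_zero (f : nat -> R) : (forall k, f k = 0) -> Series f = 0.
Proof.
  intros Hf. rewrite (Series_ext f (fun k => 0 * f k)) by (intros k; rewrite Hf; ring).
  rewrite Series_scal_l. ring.
Qed.

Lemma is_derive_sum_n_m (f : nat -> R -> R) (df : nat -> R) (x : R) (m : nat) :
  (forall j, (1 <= j <= m)%nat -> is_derive (f j) x (df j)) ->
  is_derive (fun y => sum_n_m (fun j => f j y) 1 m) x (sum_n_m df 1 m).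
Proof.
  induction m as [|m IH]; intros Hf.
  - rewrite sum_n_m_zero by lia.
    apply (is_derive_ext (fun _ => zero)).
    + intros t. rewrite sum_n_m_zero by lia. reflexivity.
    + apply (is_derive_const (K := R_AbsRing) (V := R_NormedModule)).
  - rewrite sum_n_Sm by lia.
    apply (is_derive_ext (fun y => plus (sum_n_m (fun j => f j y) 1 m) (f (S m) y))).
    + intros t. rewrite sum_n_Sm by lia. reflexivity.
    + apply (is_derive_plus (K := R_AbsRing) (V := R_NormedModule)).
      * apply IH. intros j Hj. apply Hf. lia.
      * apply Hf. lia.
Qed.

Lemma eq_of_same_derivative (f g : R -> R) (a b : R) :
  (forall t, a < t < b -> exists l, is_derive f t l /\ is_derive g t l) ->
  (forall t, a <= t <= b -> continuity_pt f t /\ continuity_pt g t) ->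
  f a = g a -> forall x, a <= x <= b -> f x = g x.
Proof.
  intros Hder Hcont Ha x Hx.
  destruct (MVT_gen (fun t => f t - g t) a x (fun _ => 0)) as [c [_ Hc]].
  - rewrite Rmin_left, Rmax_right by lra. intros t Ht.
    destruct (Hder t ltac:(lra)) as [l [Hf Hg]].
    replace 0 with (minus l l) by (unfold minus, plus, opp; simpl; ring).
    exact (is_derive_minus f g t l l Hf Hg).
  - rewrite Rmin_left, Rmax_right by lra. intros t Ht.
    destruct (Hcont t ltac:(lra)).
    apply continuity_pt_minus; assumption.
  - lra.
Qed.

Lemma PSeries_derive_shift (e : nat -> R) (N y : R) :
  Rbar_lt (Rabs y) (CV_radius (fun m => / INR m * e m)) ->
  (N - y) * PSeries (PS_derive (fun m => / INR m * e m)) y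
  = e 0%nat + Series (fun K => (N * e (S K) - e K) * y ^ K).
Proof.
  intros Hr.
  assert (Hd : forall K, PS_derive (fun m => / INR m * e m) K * y ^ K = e (S K) * y ^ K).
  { intros K. unfold PS_derive. field. apply not_0_INR. lia. }
  assert (Hex : ex_series (fun K => e (S K) * y ^ K)).
  { apply (ex_series_ext _ _ Hd). apply ex_pseries_R, ex_pseries_derive, Hr. }
  assert (Hex0 : ex_series (fun K => e K * y ^ K)).
  { apply ex_series_incr_1.
    apply (ex_series_ext (fun K => (e (S K) * y ^ K) * y)); [intros K; simpl; ring|].
    apply ex_series_scal_r, Hex. }
  assert (HexN : ex_series (fun K => N * (e (S K) * y ^ K)))
    by exact (ex_series_scal_l (K := R_AbsRing) (V := R_NormedModule) N _ Hex).
  unfold PSeries. rewrite (Series_ext _ _ Hd).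
  rewrite (Series_ext (fun K => (N * e (S K) - e K) * y ^ K)
                     (fun K => N * (e (S K) * y ^ K) - e K * y ^ K)) by (intros; ring).
  rewrite Series_minus by assumption. rewrite Series_scal_l.
  rewrite (Series_incr_1 (fun K => e K * y ^ K)) by assumption.
  rewrite (Series_ext (fun K => e (S K) * y ^ S K) (fun K => y * (e (S K) * y ^ K)))
    by (intros; simpl; ring).
  rewrite Series_scal_l. simpl. ring.
Qed.

Lemma nest_succ (z : R) (zs : list R) (K : nat) :
  nest (z :: zs) (S K) = nest (z :: zs) K + z ^ K / INR K * nest zs K.
Proof.
  cbn [nest]. replace (S K - 1)%nat with K by lia. destruct K as [|K].
  - rewrite !sum_n_m_zero by lia. simpl. unfold Rdiv. rewrite Rinv_0.
    change (@zero R_AbelianMonoid) with 0. ring.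
  - replace (S K - 1)%nat with K by lia. rewrite sum_n_Sm by lia. reflexivity.
Qed.

Lemma list_prod_ge_1 (zs : list R) :
  (forall z, In z zs -> 1 <= z) -> 1 <= fold_right Rmult 1 zs.
Proof.
  induction zs as [|z zs IH]; intros Hz; simpl; [lra|].
  assert (1 <= z) by (apply Hz; left; reflexivity).
  assert (1 <= fold_right Rmult 1 zs) by (apply IH; intros; apply Hz; right; assumption).
  nra.
Qed.

Lemma nest_geometric_bound (zs : list R) :
  (forall z, In z zs -> 1 < z) ->
  exists B, 0 <= B /\ forall m, 0 <= nest zs m <= B * fold_right Rmult 1 zs ^ m.
Proof.
  induction zs as [|z zs IH]; intros Hz.
  - exists 1. split; [lra|]. intros m. simpl. rewrite pow1. lra.
  - destruct IH as [B [HB Hb]]; [intros; apply Hz; right; assumption|].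
    assert (Hz1 : 1 < z) by (apply Hz; left; reflexivity).
    set (P := fold_right Rmult 1 zs).
    assert (HP : 1 <= P)
      by (apply list_prod_ge_1; intros; left; apply Hz; right; assumption).
    set (s := z * P). assert (Hs : 1 < s) by (unfold s; nra).
    assert (Hterm : forall k, 0 <= z ^ k / INR k * nest zs k <= B * s ^ k).
    { intros k. destruct (Hb k) as [Hc0 Hc1]. fold P in Hc1.
      pose proof (inv_INR_bounds k) as Hk.
      assert (Hzk : 0 <= z ^ k) by (apply pow_le; lra).
      unfold s. rewrite Rpow_mult_distr. unfold Rdiv.
      split; [exact (Rmult_le_pos _ _ (Rmult_le_pos _ _ Hzk (proj1 Hk)) Hc0)|].
      apply Rle_trans with (z ^ k * 1 * (B * P ^ k)); [|right; ring].
      apply Rmult_le_compat; [| |apply Rmult_le_compat_l|]; try lra.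
      apply Rmult_le_pos; lra. }
    exists (B / (s - 1)). split; [apply Rdiv_le_0_compat; lra|].
    intros m. cbn [nest fold_right]. fold P. fold s. split.
    + apply sum_n_m_nonneg. intros k. apply Hterm.
    + apply Rle_trans with (sum_n_m (fun k => B * s ^ k) 1 (m - 1)).
      * apply sum_n_m_le. intros k. apply Hterm.
      * rewrite (sum_n_m_mult_l (K := R_Ring) B (fun k => s ^ k)).
        change (mult B ?x) with (B * x).
        apply Rle_trans with (B * (s ^ m / (s - 1))).
        -- apply Rmult_le_compat_l; [lra|]. apply geom_sum_le, Hs.
        -- right. unfold Rdiv. ring.
Qed.

(* The parameters z_2, ..., z_j of M_{j,n}; they do not depend on y. *)
Definition tail_params (j n : nat) : list R := map (zpar n 0) (seq 2 (j - 1)).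

Lemma params_split (j n : nat) (y : R) :
  (1 <= j)%nat -> map (zpar n y) (seq 1 j) = (y / INR n) :: tail_params j n.
Proof.
  intros Hj. destruct j as [|j]; [lia|].
  unfold tail_params. replace (S j - 1)%nat with j by lia. simpl. f_equal.
  apply map_ext_in. intros i Hi. apply in_seq in Hi.
  unfold zpar. destruct (Nat.eqb_spec i 1); [lia|reflexivity].
Qed.

Lemma tail_params_succ (j n : nat) :
  (1 <= j)%nat -> (2 <= n)%nat ->
  tail_params (S j) n = (INR n / INR (n - 1)) :: tail_params j (n - 1).
Proof.
  intros Hj Hn. unfold tail_params.
  replace (S j - 1)%nat with (S (j - 1)) by lia. cbn [seq map]. f_equal.
  - unfold zpar. simpl Nat.eqb. cbv iota. rewrite minus_INR by lia. f_equal; simpl; ring.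
  - rewrite <- seq_shift, map_map. apply map_ext_in. intros i Hi. apply in_seq in Hi.
    unfold zpar. destruct (Nat.eqb_spec (S i) 1), (Nat.eqb_spec i 1); try lia.
    rewrite minus_INR, S_INR by lia. simpl. f_equal; ring.
Qed.

Lemma tail_params_gt_1 (j n : nat) (z : R) :
  (j <= n)%nat -> In z (tail_params j n) -> 1 < z.
Proof.
  intros Hjn Hz. unfold tail_params in Hz. apply in_map_iff in Hz.
  destruct Hz as [i [<- Hi]]. apply in_seq in Hi.
  unfold zpar. destruct (Nat.eqb_spec i 1); [lia|].
  assert (INR i <= INR n) by (apply le_INR; lia).
  assert (Hd : 0 < INR n + 1 - INR i) by lra.
  apply (Rmult_lt_reg_r (INR n + 1 - INR i)); [exact Hd|].
  unfold Rdiv. rewrite Rmult_assoc, Rinv_l by lra. lra.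
Qed.

(* The product of the tail parameters telescopes to n / (n + 1 - j). *)
Lemma tail_params_prod (j n : nat) :
  (1 <= j <= n)%nat -> fold_right Rmult 1 (tail_params j n) = INR n / (INR n + 1 - INR j).
Proof.
  revert n. induction j as [|j IH]; intros n Hjn; [lia|].
  destruct (Nat.eq_dec j 0) as [->|Hj0].
  - assert (INR n <> 0) by (apply not_0_INR; lia).
    simpl. field. lra.
  - rewrite tail_params_succ by lia. cbn [fold_right].
    rewrite IH, minus_INR, (S_INR j) by lia. change (INR 1) with 1.
    assert (INR j + 1 <= INR n) by (rewrite <- S_INR; apply le_INR; lia).
    assert (1 <= INR j) by (apply (le_INR 1); lia).
    field. repeat split; lra.
Qed.

(* M_{j,n}(y) = sum_m Mcoef j n m * y^m, where Mcoef j n m = Mnum j n m / m and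
   Mnum j n m = n^{-m} times the nested sum over the tail parameters. *)
Definition Mnum (j n m : nat) : R := (/ INR n) ^ m * nest (tail_params j n) m.
Definition Mcoef (j n m : nat) : R := / INR m * Mnum j n m.

Definition dM (j n : nat) (y : R) : R := PSeries (PS_derive (Mcoef j n)) y.

(* M_{j,n} is the power series with coefficients Mcoef j n: its partial sums
   over n_1 < N + 1 are the partial sums of the power series up to y^N. *)
Lemma M_PSeries (j n : nat) (y : R) : (1 <= j)%nat -> M j n y = PSeries (Mcoef j n) y.
Proof.
  intros Hj. unfold M, PSeries, Series. rewrite params_split by exact Hj.
  rewrite <- Lim_seq_incr_1. f_equal. apply Lim_seq_ext. intros K.
  cbn [nest]. replace (S K - 1)%nat with K by lia.
  unfold sum_n. rewrite (sum_Sn_m _ 0) by lia.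
  assert (H0 : Mcoef j n 0 = 0) by (unfold Mcoef; simpl; rewrite Rinv_0; ring).
  rewrite H0. change (plus ?a ?b) with (a + b). rewrite Rmult_0_l, Rplus_0_l.
  assert (Hterm : forall m, (y / INR n) ^ m / INR m * nest (tail_params j n) m
                           = Mcoef j n m * y ^ m).
  { intros m. unfold Mcoef, Mnum, Rdiv. rewrite Rpow_mult_distr. ring. }
  apply sum_n_m_ext. exact Hterm.
Qed.

(* The coefficients are O((n + 1 - j)^{-m}): the radius of convergence of
   M_{j,n} is at least n + 1 - j. *)
Lemma Mcoef_radius (j n : nat) :
  (1 <= j <= n)%nat -> Rbar_le (INR n + 1 - INR j) (CV_radius (Mcoef j n)).
Proof.
  intros Hjn.
  destruct (nest_geometric_bound (tail_params j n)) as [B [HB Hb]].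
  { intros z. apply tail_params_gt_1. lia. }
  rewrite tail_params_prod in Hb by exact Hjn.
  assert (Hn : 0 < INR n) by (apply lt_0_INR; lia).
  assert (INR j <= INR n) by (apply le_INR; lia).
  set (r := INR n + 1 - INR j) in *. assert (Hr : 0 < r) by (unfold r; lra).
  apply (proj1 (CV_radius_bounded (Mcoef j n))). exists B. intros m.
  destruct (Hb m) as [Hc0 Hc1]. pose proof (inv_INR_bounds m) as Hm.
  assert (Hnm : 0 < (/ INR n) ^ m) by (apply pow_lt, Rinv_0_lt_compat, Hn).
  assert (Hrm : 0 < r ^ m) by (apply pow_lt, Hr).
  assert (Hscale : (/ INR n) ^ m * (B * (INR n / r) ^ m) * r ^ m = B).
  { unfold Rdiv. rewrite !Rpow_mult_distr, pow_inv, pow_inv.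
    field. split; apply pow_nonzero; lra. }
  unfold Mcoef, Mnum.
  rewrite Rabs_pos_eq by (apply Rmult_le_pos; [apply Rmult_le_pos, Rmult_le_pos|]; lra).
  rewrite <- Hscale, Rmult_assoc.
  apply Rle_trans with (1 * ((/ INR n) ^ m * nest (tail_params j n) m * r ^ m)).
  - apply Rmult_le_compat_r; [|lra]. apply Rmult_le_pos; [apply Rmult_le_pos|]; lra.
  - rewrite Rmult_1_l. apply Rmult_le_compat_r; [lra|]. apply Rmult_le_compat_l; lra.
Qed.

Lemma Mcoef_converges (j n : nat) (y : R) :
  (1 <= j <= n)%nat -> Rabs y < INR n + 1 - INR j ->
  Rbar_lt (Rabs y) (CV_radius (Mcoef j n)).
Proof.
  intros Hjn Hy. eapply Rbar_lt_le_trans; [|apply Mcoef_radius, Hjn]. exact Hy.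
Qed.

Lemma M_is_derive (j n : nat) (y : R) :
  (1 <= j <= n)%nat -> Rabs y < INR n + 1 - INR j -> is_derive (M j n) y (dM j n y).
Proof.
  intros Hjn Hy. apply (is_derive_ext (PSeries (Mcoef j n))).
  - intros t. symmetry. apply M_PSeries. lia.
  - apply is_derive_PSeries, Mcoef_converges; assumption.
Qed.

Lemma M_at_0 (j n : nat) : (1 <= j)%nat -> M j n 0 = 0.
Proof.
  intros Hj. rewrite M_PSeries, PSeries_0 by exact Hj.
  unfold Mcoef. simpl. rewrite Rinv_0. ring.
Qed.

(* M_{1,n}(y) = -log(1 - y/n), hence (n - y) M_{1,n}'(y) = 1. *)
Lemma M1_ode (n : nat) (y : R) :
  (1 <= n)%nat -> Rabs y < INR n -> (INR n - y) * dM 1 n y = 1.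
Proof.
  intros Hn Hy. assert (Hn0 : INR n <> 0) by (apply not_0_INR; lia).
  unfold dM, Mcoef. rewrite PSeries_derive_shift.
  - rewrite Series_zero; [unfold Mnum; simpl; ring|].
    intros K. unfold Mnum. simpl. field. exact Hn0.
  - apply Mcoef_converges; [lia|]. simpl INR. lra.
Qed.

(* Comparing coefficients with the recursion of the nested sums:
   (n - y) M_{j+1,n}'(y) = M_{j,n-1}(y). *)
Lemma Msucc_ode (j n : nat) (y : R) :
  (1 <= j)%nat -> (j + 2 <= n)%nat -> Rabs y < INR n - INR j ->
  (INR n - y) * dM (S j) n y = M j (n - 1) y.
Proof.
  intros Hj Hn Hy.
  assert (Hjn : INR j + 2 <= INR n).
  { replace (INR j + 2) with (INR (S (S j))) by (rewrite !S_INR; ring).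
    apply le_INR. lia. }
  assert (Hj0 : 0 <= INR j) by apply pos_INR.
  assert (Hn1 : INR (n - 1) = INR n - 1) by (rewrite minus_INR by lia; reflexivity).
  unfold dM, Mcoef. rewrite PSeries_derive_shift.
  - rewrite M_PSeries by exact Hj. unfold PSeries.
    replace (Mnum (S j) n 0) with 0.
    2:{ unfold Mnum. rewrite tail_params_succ by lia. simpl.
        rewrite sum_n_m_zero by lia. change (@zero R_AbelianMonoid) with 0. ring. }
    rewrite Rplus_0_l. apply Series_ext. intros K. f_equal.
    unfold Mcoef, Mnum. rewrite tail_params_succ by lia.
    rewrite nest_succ, Hn1. unfold Rdiv. rewrite Rpow_mult_distr, !pow_inv. simpl pow.
    assert (INR n ^ K <> 0) by (apply pow_nonzero; lra).
    assert ((INR n - 1) ^ K <> 0) by (apply pow_nonzero; lra).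
    generalize (/ INR K); intros inv_K. field. repeat split; lra.
  - apply Mcoef_converges; [lia|]. rewrite S_INR. lra.
Qed.

Definition dickman_rhs (rho : R -> R) (n : nat) (y : R) : R :=
  rho (INR n) + sum_n_m (fun j => rho (INR n - INR j) * M j n y) 1 (n - 1).

Lemma dickman_rhs_at_0 (rho : R -> R) (n : nat) : dickman_rhs rho n 0 = rho (INR n).
Proof.
  unfold dickman_rhs.
  rewrite (sum_n_m_ext_loc _ (fun _ => zero)), sum_n_m_const_zero.
  - change (@zero R_AbelianMonoid) with 0. ring.
  - intros j Hj. rewrite M_at_0 by lia. apply Rmult_0_r.
Qed.

Lemma dickman_rhs_derive (rho : R -> R) (n : nat) (y : R) :
  (1 <= n)%nat -> Rabs y < 2 ->
  is_derive (dickman_rhs rho n) y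
    (sum_n_m (fun j => rho (INR n - INR j) * dM j n y) 1 (n - 1)).
Proof.
  intros Hn Hy. unfold dickman_rhs.
  rewrite <- (Rplus_0_l (sum_n_m _ 1 (n - 1))).
  apply (is_derive_plus (K := R_AbsRing) (V := R_NormedModule)).
  - apply (is_derive_const (K := R_AbsRing) (V := R_NormedModule)).
  - apply (is_derive_sum_n_m (fun j y => rho (INR n - INR j) * M j n y)).
    intros j Hj. apply is_derive_scal, M_is_derive; [lia|].
    assert (INR j + 1 <= INR n) by (rewrite <- S_INR; apply le_INR; lia). lra.
Qed.

(* The differential recursion (n - y) F_n'(y) = F_{n-1}(y), which follows
   termwise from M1_ode (for j = 1) and Msucc_ode (for j >= 2). *)
Lemma dickman_rhs_ode (rho : R -> R) (n : nat) (y : R) :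
  (2 <= n)%nat -> Rabs y < 2 ->
  (INR n - y) * sum_n_m (fun j => rho (INR n - INR j) * dM j n y) 1 (n - 1)
  = dickman_rhs rho (n - 1) y.
Proof.
  intros Hn Hy. destruct n as [|[|m]]; [lia|lia|].
  replace (S (S m) - 1)%nat with (S m) by lia. unfold dickman_rhs.
  assert (HmS : INR (S (S m)) = INR m + 2) by (rewrite !S_INR; ring).
  assert (Hm : 0 <= INR m) by apply pos_INR.
  rewrite <- (sum_n_m_mult_l (K := R_Ring)). change (mult ?a ?b) with (a * b).
  rewrite sum_Sn_m by lia. change (plus ?a ?b) with (a + b). f_equal.
  - rewrite Rmult_comm, Rmult_assoc, (Rmult_comm (dM 1 _ y)), M1_ode by (lia || lra).
    rewrite HmS, Rmult_1_r, !S_INR. change (INR 0) with 0. f_equal. ring.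
  - rewrite <- sum_n_m_S. replace (S m - 1)%nat with m by lia.
    apply sum_n_m_ext_loc. intros k Hk.
    assert (Hk' : INR k <= INR m) by (apply le_INR; lia).
    rewrite Rmult_comm, Rmult_assoc, (Rmult_comm (dM (S k) _ y)), Msucc_ode
      by (lia || lra).
    replace (S (S m) - 1)%nat with (S m) by lia.
    rewrite HmS, !S_INR. f_equal. f_equal. ring.
Qed.

Lemma dickman_continuous (rho : R -> R) :
  is_dickman rho -> forall u, 0 < u -> continuity_pt rho u.
Proof.
  intros [Hc _] u Hu. apply continuity_pt_filterlim. intros P HP.
  assert (Hpos : locally u (fun x => 0 <= x)).
  { apply (locally_interval _ u 0 p_infty); simpl; auto. intros; lra. }
  specialize (Hc u (Rlt_le _ _ Hu) P HP). unfold filtermap, within in Hc.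
  unfold filtermap. generalize (filter_and _ _ Hc Hpos).
  apply filter_imp. intros x [Hx Hx0]. exact (Hx Hx0).
Qed.

Lemma dickman_shift_derive (rho : R -> R) (N t : R) :
  is_dickman rho -> 1 < N - t ->
  is_derive (fun y => rho (N - y)) t (rho (N - 1 - t) / (N - t)).
Proof.
  intros [_ [_ Hode]] Ht. destruct (Hode (N - t) Ht) as [d [Hd Hud]].
  assert (Hlin : is_derive (fun y => N - y) t (-1)) by (auto_derive; auto; ring).
  replace (rho (N - 1 - t) / (N - t)) with (-1 * d).
  - exact (is_derive_comp rho (fun y => N - y) t d (-1) Hd Hlin).
  - replace (rho (N - 1 - t)) with (- ((N - t) * d))
      by (rewrite Hud, Ropp_involutive; f_equal; ring).
    field. lra.
Qed.

(* Induction step: if rho(n - 1 - y) = F_{n-1}(y) on [0, 1], then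
   rho(n - y) = F_n(y) on [0, 1], both sides having the derivative
   rho(n - 1 - y) / (n - y) and the same value rho(n) at y = 0. *)
Lemma dickman_step (rho : R -> R) (n : nat) :
  is_dickman rho -> (2 <= n)%nat ->
  (forall y, 0 <= y <= 1 -> rho (INR (n - 1) - y) = dickman_rhs rho (n - 1) y) ->
  forall y, 0 <= y <= 1 -> rho (INR n - y) = dickman_rhs rho n y.
Proof.
  intros Hrho Hn IH.
  assert (Hn2 : 2 <= INR n) by (apply (le_INR 2); lia).
  assert (Hn1 : INR (n - 1) = INR n - 1) by (rewrite minus_INR by lia; reflexivity).
  apply eq_of_same_derivative.
  - intros t Ht. exists (rho (INR n - 1 - t) / (INR n - t)). split.
    + apply dickman_shift_derive; [exact Hrho|lra].
    + pose proof (dickman_rhs_derive rho n t ltac:(lia) ltac:(rewrite Rabs_pos_eq; lra)) as Hd.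
      assert (Hval : sum_n_m (fun j => rho (INR n - INR j) * dM j n t) 1 (n - 1)
                     = rho (INR n - 1 - t) / (INR n - t) :> R).
      { apply (Rmult_eq_reg_l (INR n - t)); [|lra].
        rewrite dickman_rhs_ode by (lia || (rewrite Rabs_pos_eq; lra)).
        rewrite <- IH, Hn1 by lra. field. lra. }
      rewrite <- Hval. exact Hd.
  - intros t Ht. split.
    + apply (continuity_pt_comp (fun y => INR n - y) rho).
      * apply continuity_pt_minus; [|apply continuity_pt_id].
        apply continuity_pt_const. intros ? ?. reflexivity.
      * apply dickman_continuous; [exact Hrho|]. unfold comp. lra.
    + apply continuity_pt_filterlim, (ex_derive_continuous (dickman_rhs rho n)).
      eexists. apply dickman_rhs_derive; [lia|]. rewrite Rabs_pos_eq; lra.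
  - rewrite dickman_rhs_at_0, Rminus_0_r. reflexivity.
Qed.

Theorem theorem1 (rho : R -> R) (Hrho : is_dickman rho) (n : nat) (y : R) :
  (1 <= n)%nat -> 0 <= y <= 1 ->
  rho (INR n - y) =
  rho (INR n) + sum_n_m (fun j => rho (INR n - INR j) * M j n y) 1 (n - 1).
Proof.
  intros Hn. destruct n as [|p]; [lia|]. clear Hn.
  revert y. induction p as [|p IH]; intros y Hy.
  - (* n = 1: both sides equal 1, since rho = 1 on [0, 1] *)
    destruct Hrho as [_ [Hone _]].
    rewrite sum_n_m_zero by lia. simpl INR. rewrite !Hone by lra.
    change (@zero R_AbelianMonoid) with 0. ring.
  - apply (dickman_step rho (S (S p)) Hrho); [lia| |exact Hy].
    replace (S (S p) - 1)%nat with (S p) by lia. exact IH.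
Qed.
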